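(* Let $U=\{1,\dots,N\}$ be a finite population with auxiliary vectors $\bm{x}_i\in\mathbb{R}^p$, $i\in U$. Let $k$ be the reproducing kernel associated with the energy distance, so that for any probability measures $P,Q$ on $\mathbb{R}^p$ with finite first moment, \[ \mathcal{E}(P,Q)=\mathrm{MMD}_k^2(P,Q)=\|\mu_P-\mu_Q\|_{\mathcal{H}_k}^2, \] where $\mathcal{H}_k$ is the reproducing kernel Hilbert space of $k$ and $\mu_P=E_{\bm{X}\sim P}[k(\bm{X},\cdot)]\in\mathcal{H}_k$ is the kernel mean embedding. Let $f\in\mathcal{H}_k$, define $y_i=f(\bm{x}_i)$ for $i\in U$, and let \[ \hat Y=\frac{N}{n}\sum_{i\in S} y_i,\qquad Y=\sum_{i\in U}y_i. \] Then for any sampling design producing a random sample $S\subset U$ of fixed size $n$, \[ E\big[(\hat Y-Y)^2\big]\le N^2\,\|f\|_{\mathcal{H}_k}^2\,E\big[\mathcal{E}(F_S,F_U)\big], \] where the expectations are with respect to the sampling design.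
   Context: For a subset $s\subset U$ of size $n$, $F_s=\frac1n\sum_{i\in s}\delta_{\bm{x}_i}$ and $F_U=\frac1N\sum_{i\in U}\delta_{\bm{x}_i}$ are the empirical distributions of the auxiliary vectors in $s$ and in $U$, where $\delta_{\bm{x}}$ is the Dirac measure at $\bm{x}$. The energy distance between distributions $P$ and $Q$ is $\mathcal{E}(P,Q)=2E\|\bm{X}-\bm{Z}\|-E\|\bm{X}-\bm{X}'\|-E\|\bm{Z}-\bm{Z}'\|$, where $\bm{X},\bm{X}'\sim P$ and $\bm{Z},\bm{Z}'\sim Q$ are independent and $\|\cdot\|$ is the Euclidean norm. *)

From HB Require Import structures.
From mathcomp Require Import all_boot all_order all_algebra.
From mathcomp Require Import all_classical all_reals all_analysis.
Set Implicit Arguments. Unset Strict Implicit. Unset Printing Implicit Defensive.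
Import Order.TTheory GRing.Theory Num.Theory.
Local Open Scope ring_scope.
Local Open Scope classical_set_scope.
Import numFieldNormedType.Exports.

Section Energy.
Variables (R : realType) (p : nat).
Notation pt := 'rV[R]_p.

Definition enorm (v : pt) : R := Num.sqrt (\sum_(i < p) (v 0 i) ^+ 2).

(* Finitely supported probability distributions on R^p, given as a list of
   (weight, atom) pairs: the measure sum_c c.1 * delta_{c.2}. *)
Definition fdist := seq (R * pt).

Definition Eabs (P Q : fdist) : R :=
  \sum_(a <- P) \sum_(b <- Q) a.1 * b.1 * enorm (a.2 - b.2).
Definition energy_dist (P Q : fdist) : R :=
  2 * Eabs P Q - Eabs P P - Eabs Q Q.

Definition empirical (N : nat) (x : 'I_N -> pt) (s : {set 'I_N}) : fdist :=
  [seq (#|s|%:R^-1, x i) | i <- enum s].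

(* The (distance-induced) reproducing kernel of the energy distance,
   k(x,y) = |x| + |y| - |x-y|, for which MMD_k^2 = energy distance. *)
Definition kE (u v : pt) : R := enorm u + enorm v - enorm (u - v).

(* Pre-RKHS H_0 = span { k(z,.) } : an element is a finite combination
   sum_c c.1 * k(c.2, .). *)
Definition pre := seq (R * pt).
Definition pre_eval (h : pre) (y : pt) : R := \sum_(c <- h) c.1 * kE c.2 y.
Definition pre_ip (h g : pre) : R :=
  \sum_(c <- h) \sum_(d <- g) c.1 * d.1 * kE c.2 d.2.
Definition pre_sub (h g : pre) : pre := h ++ [seq (- d.1, d.2) | d <- g].

(* Moore-Aronszajn completion: f belongs to the RKHS H_k with norm r iff f is
   the pointwise limit of an H_0-Cauchy sequence u whose H_0-norms tend to r. *)
Definition rkhs_norm_is (f : pt -> R) (r : R) : Prop :=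
  exists u : nat -> pre,
    (forall e : R, 0 < e -> exists M : nat, forall m k : nat,
        (M <= m)%N -> (M <= k)%N -> pre_ip (pre_sub (u m) (u k)) (pre_sub (u m) (u k)) < e)
    /\ (forall y : pt, (fun m => pre_eval (u m) y) @ \oo --> f y)
    /\ ((fun m => Num.sqrt (pre_ip (u m) (u m))) @ \oo --> r).

End Energy.

From HB Require Import structures.
From mathcomp Require Import all_boot all_order all_algebra.
From mathcomp Require Import all_classical all_reals all_analysis.
From mathcomp Require Import ring lra.
Set Implicit Arguments. Unset Strict Implicit. Unset Printing Implicit Defensive.
Import Order.TTheory GRing.Theory Num.Theory.
Local Open Scope ring_scope.
Import numFieldNormedType.Exports.

(* The estimation error is [N] times the integral of [f] against the signed
   measure [F_S - F_U].  By the reproducing property and Cauchy-Schwarz its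
   square is at most [N^2 |f|^2 <F_S - F_U, F_S - F_U>_k], and this inner
   product is the energy distance because both measures have mass one.  The
   substance is that [<., .>_k] is positive semidefinite, i.e. that the
   Euclidean distance is conditionally negative definite.  Lift the points to a
   sphere of radius [t] in [R^(p+1)]: chordal distances there are
   [sqrt 2 * t * sqrt (1 - x)] for a Gram kernel [x] with values in [[0, 1]],
   and they differ from the original distances by [O(1/t)].  Finally
   [1 - sqrt (1 - x)] is a uniform limit on [[0, 1]] of polynomials in [x] with
   nonnegative coefficients, and these map Gram kernels to Gram kernels by the
   Schur product property. *)

Lemma sqr_le_mul_of_quad_ge0 (R : realFieldType) (a b c : R) :
  0 <= c -> (forall t, 0 <= a + 2 * t * b + t ^+ 2 * c) -> b ^+ 2 <= a * c.
Proof.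
move=> c_ge0 quad_ge0; have [c0|c_neq0] := eqVneq c 0.
  have [b0|b_neq0] := eqVneq b 0; first by rewrite b0 c0 expr0n mulr0.
  have := quad_ge0 (- (a + 1) / (2 * b)); rewrite c0 mulr0 addr0.
  by rewrite (_ : 2 * _ * b = - (a + 1)); [lra | field].
have c_gt0 : 0 < c by rewrite lt_def c_neq0.
have := quad_ge0 (- b / c).
by rewrite (_ : _ + _ = a - b ^+ 2 / c) ?subr_ge0 ?ler_pdivrMr //; field.
Qed.

Section WeightedForms.
Variables (R : realFieldType) (T : eqType).
Implicit Types (K D : T -> T -> R) (F G : T -> R) (h g : seq (R * T)).

Definition mass h := \sum_(c <- h) c.1.
Definition abs_mass h := \sum_(c <- h) `|c.1|.
Definition wsum F h := \sum_(c <- h) c.1 * F c.2.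
Definition wscale (a : R) h := [seq (a * c.1, c.2) | c <- h].
Definition qform K h g := \sum_(c <- h) \sum_(d <- g) c.1 * d.1 * K c.2 d.2.

Lemma eq_qform K K' h g : K =2 K' -> qform K h g = qform K' h g.
Proof.
by move=> eqK; apply: eq_bigr => c _; apply: eq_bigr => d _; rewrite eqK.
Qed.

Lemma qform_catl K h1 h2 g : qform K (h1 ++ h2) g = qform K h1 g + qform K h2 g.
Proof. exact: big_cat. Qed.

Lemma qform_catr K h g1 g2 : qform K h (g1 ++ g2) = qform K h g1 + qform K h g2.
Proof. by rewrite /qform -big_split; apply: eq_bigr => c _; rewrite big_cat. Qed.

Lemma qform_scalel K a h g : qform K (wscale a h) g = a * qform K h g.
Proof.
rewrite /qform big_map mulr_sumr; apply: eq_bigr => c _.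
by rewrite mulr_sumr; apply: eq_bigr => d _ /=; ring.
Qed.

Lemma qform_scaler K a h g : qform K h (wscale a g) = a * qform K h g.
Proof.
rewrite /qform mulr_sumr; apply: eq_bigr => c _.
by rewrite big_map mulr_sumr; apply: eq_bigr => d _ /=; ring.
Qed.

Lemma qformC K h g : (forall u v, K u v = K v u) -> qform K h g = qform K g h.
Proof.
move=> symK; rewrite /qform exchange_big; apply: eq_bigr => c _.
by apply: eq_bigr => d _; rewrite symK [d.1 * _]mulrC.
Qed.

Lemma qformZ K a h g : qform (fun u v => a * K u v) h g = a * qform K h g.
Proof.
rewrite /qform mulr_sumr; apply: eq_bigr => c _.
by rewrite mulr_sumr; apply: eq_bigr => d _; ring.
Qed.

Lemma qform1B K h g :
  qform (fun u v => 1 - K u v) h g = mass h * mass g - qform K h g.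
Proof.
rewrite /qform big_distrlr -sumrB; apply: eq_bigr => c _.
by rewrite -sumrB; apply: eq_bigr => d _ /=; ring.
Qed.

Lemma qform_split F G D h g :
  qform (fun u v => F u + G v - D u v) h g =
  wsum F h * mass g + mass h * wsum G g - qform D h g.
Proof.
rewrite /qform !big_distrlr -big_split -sumrB; apply: eq_bigr => c _.
by rewrite -big_split -sumrB; apply: eq_bigr => d _ /=; ring.
Qed.

Lemma qform_seq1l K c g : qform K [:: c] g = c.1 * wsum (K c.2) g.
Proof.
by rewrite /qform big_seq1 mulr_sumr; apply: eq_bigr => d _; rewrite mulrA.
Qed.

Lemma qform_seq1r K h d : qform K h [:: d] = wsum (K^~ d.2) h * d.1.
Proof.
by rewrite /qform /wsum mulr_suml; apply: eq_bigr => c _; rewrite big_seq1 /=; ring.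
Qed.

(* Reduces positivity of the kernel [D u z + D z v - D u v] to conditional
   negativity of [D]: the extended weight sequence has mass zero. *)
Lemma qform_pointed D z h : D z z = 0 ->
  qform (fun u v => D u z + D z v - D u v) h h =
  - qform D ((- mass h, z) :: h) ((- mass h, z) :: h).
Proof.
move=> Dzz; rewrite -cat1s qform_catl !qform_catr !qform_seq1l !qform_seq1r.
by rewrite qform_split /wsum big_seq1 /= Dzz; ring.
Qed.

Lemma qform_cauchy_schwarz K : (forall u v, K u v = K v u) ->
  (forall h, 0 <= qform K h h) ->
  forall h g, qform K h g ^+ 2 <= qform K h h * qform K g g.
Proof.
move=> symK psdK h g; apply: sqr_le_mul_of_quad_ge0 => [|a]; first exact: psdK.
have := psdK (h ++ wscale a g).
rewrite qform_catl !qform_catr !qform_scalel !qform_scaler (qformC g h symK).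
by congr (0 <= _); ring.
Qed.

Lemma qform_le_approx K K' h (e : R) :
  (forall c d, c \in h -> d \in h -> `|K c.2 d.2 - K' c.2 d.2| <= e) ->
  qform K h h <= qform K' h h + e * abs_mass h ^+ 2.
Proof.
move=> closeK.
suff : qform K h h - qform K' h h <= e * abs_mass h ^+ 2 by lra.
have -> : qform K h h - qform K' h h = qform (fun u v => K u v - K' u v) h h.
  rewrite /qform -sumrB; apply: eq_bigr => c _.
  by rewrite -sumrB; apply: eq_bigr => d _; ring.
have -> : e * abs_mass h ^+ 2 = \sum_(c <- h) \sum_(d <- h) `|c.1| * `|d.1| * e.
  rewrite expr2 big_distrlr mulr_sumr; apply: eq_bigr => c _.
  by rewrite mulr_sumr; apply: eq_bigr => d _ /=; ring.
rewrite [leRHS]big_seq [leLHS]big_seq; apply: ler_sum => c hc.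
rewrite [leRHS]big_seq [leLHS]big_seq; apply: ler_sum => d hd.
rewrite -normrM; apply: le_trans (ler_norm _) _.
by rewrite !normrM ler_wpM2l ?mulr_ge0 ?closeK.
Qed.

Definition is_gram K :=
  exists fs : seq (T -> R), forall u v, K u v = \sum_(f <- fs) f u * f v.

Lemma eq_gram K K' : K =2 K' -> is_gram K -> is_gram K'.
Proof. by move=> eqK [fs defK]; exists fs => u v; rewrite -eqK. Qed.

Lemma gram_qform_ge0 K h : is_gram K -> 0 <= qform K h h.
Proof.
case=> fs defK.
have -> : qform K h h = \sum_(f <- fs) wsum f h ^+ 2.
  rewrite /qform; under eq_bigr => c _ do under eq_bigr => d _ do rewrite defK mulr_sumr.
  under eq_bigr => c _ do rewrite exchange_big.
  rewrite exchange_big; apply: eq_bigr => f _.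
  rewrite expr2 big_distrlr; apply: eq_bigr => c _; apply: eq_bigr => d _ /=; ring.
by apply: sumr_ge0 => f _; apply: sqr_ge0.
Qed.

Lemma gramD K K' : is_gram K -> is_gram K' -> is_gram (fun u v => K u v + K' u v).
Proof.
by case=> fs defK [fs' defK']; exists (fs ++ fs') => u v; rewrite big_cat defK defK'.
Qed.

Lemma gramM K K' : is_gram K -> is_gram K' -> is_gram (fun u v => K u v * K' u v).
Proof.
case=> fs defK [fs' defK'].
exists [seq (fun u => f u * f' u) | f <- fs, f' <- fs'] => u v.
rewrite big_allpairs_dep defK defK' big_distrlr; apply: eq_bigr => f _.
by apply: eq_bigr => f' _ /=; ring.
Qed.

End WeightedForms.

Section GramRcf.
Variables (R : rcfType) (T : eqType).
Implicit Types (K : T -> T -> R).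

Lemma gramZ K (a : R) : 0 <= a -> is_gram K -> is_gram (fun u v => a * K u v).
Proof.
move=> a_ge0 [fs defK]; exists [seq (fun u => Num.sqrt a * f u) | f <- fs] => u v.
rewrite big_map defK mulr_sumr; apply: eq_bigr => f _.
by rewrite mulrACA -expr2 sqr_sqrtr.
Qed.

End GramRcf.

Lemma le0_of_le_invS (R : archiRealFieldType) (y C : R) :
  (forall n : nat, y <= C / n.+1%:R) -> y <= 0.
Proof.
move=> small_y; have [C_le0|C_gt0] := lerP C 0.
  by apply: le_trans (small_y 0%N) _; rewrite divr1.
apply/ler_addgt0Pr => e e_gt0; rewrite add0r.
have := archi_boundP (divr_ge0 (ltW C_gt0) (ltW e_gt0)).
set n := Num.Def.archi_bound _ => ltCn.
apply: le_trans (small_y n) _.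
rewrite ler_pdivrMr ?ltr0n // -ler_pdivrMl // mulrC.
by apply/ltW/(lt_le_trans ltCn); rewrite ler_nat.
Qed.

(* Picard iteration for the fixed point [q = (x + q ^+ 2) / 2], that is
   [q = 1 - sqrt (1 - x)]; every iterate is a polynomial in [x] with
   nonnegative coefficients. *)
Section Sqrt1mApprox.
Variable R : realType.


Fixpoint sqrt1m_approx (n : nat) (x : R) : R :=
  if n is n'.+1 then (x + sqrt1m_approx n' x ^+ 2) / 2 else 0.

Lemma gram_sqrt1m_approx (T : eqType) (K : T -> T -> R) n :
  is_gram K -> is_gram (fun u v => sqrt1m_approx n (K u v)).
Proof.
move=> gK; elim: n => [|n IHn] /=; first by exists [::] => u v; rewrite big_nil.
pose q u v := sqrt1m_approx n (K u v).
apply: (@eq_gram _ _ (fun u v => 2^-1 * (K u v + q u v * q u v))).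
  by move=> u v; rewrite expr2 mulrC.
by apply: gramZ; rewrite ?invr_ge0 //; apply: gramD => //; apply: gramM.
Qed.

Lemma sqrt1m_error_step (k e : R) :
  2 <= k -> 0 <= e <= 2 / k -> e * (2 - e) / 2 <= 2 / (k + 1).
Proof.
move=> k_ge2 /andP[e_ge0 e_le]; have k_gt0 : 0 < k by lra.
have m_le1 : 2 / k <= 1 by rewrite ler_pdivrMr // mul1r.
apply: le_trans (_ : 2 / k * (2 - 2 / k) / 2 <= _).
  by rewrite ler_pM2r //; nra.
have -> : 2 / k * (2 - 2 / k) / 2 = 2 / (k + 1) - 2 / (k ^+ 2 * (k + 1)).
  by field; rewrite !gt_eqF //; lra.
by rewrite gerBl divr_ge0 // mulr_ge0 //; nra.
Qed.

Lemma sqrt1m_approx_bounds n x : 0 <= x <= 1 ->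
  0 <= sqrt1m_approx n x <= 1 - Num.sqrt (1 - x) /\
  1 - Num.sqrt (1 - x) - sqrt1m_approx n x <= 2 / (n + 2)%:R.
Proof.
case/andP=> x_ge0 x_le1; set r := Num.sqrt (1 - x).
have r_ge0 : 0 <= r by apply: sqrtr_ge0.
have r2 : r ^+ 2 = 1 - x by rewrite sqr_sqrtr // subr_ge0.
have r_le1 : r <= 1 by nra.
elim: n => [|n [/andP[q_ge0 q_le] IHn]] /=.
  by rewrite subr0 lexx divff //=; lra.
set q := sqrt1m_approx n x in q_ge0 q_le IHn *.
split; first by apply/andP; split; rewrite ?ler_pdivrMr ?divr_ge0 //; nra.
set e := 1 - r - q.
have -> : 1 - r - (x + q ^+ 2) / 2 = e * (2 - e) / 2 - r * e.
  by rewrite /e (_ : x = 1 - r ^+ 2); [field | rewrite r2; ring].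
have -> : (n.+1 + 2)%:R = (n + 2)%:R + 1 :> R by rewrite addSn -addn1 natrD addnC.
have re_ge0 : 0 <= r * e by rewrite mulr_ge0 // subr_ge0.
rewrite lerBlDr; apply: ler_wpDr => //; apply: sqrt1m_error_step.
  by rewrite ler_nat addn2.
by rewrite /e subr_ge0 q_le.
Qed.

Lemma qform_sqrt1m_le0 (T : eqType) (K : T -> T -> R) (h : seq (R * T)) :
  is_gram K -> mass h = 0 ->
  (forall c d, c \in h -> d \in h -> 0 <= K c.2 d.2 <= 1) ->
  qform (fun u v => Num.sqrt (1 - K u v)) h h <= 0.
Proof.
move=> gK mass0 K01; apply: (@le0_of_le_invS _ _ (2 * abs_mass h ^+ 2)) => n.
pose q u v := sqrt1m_approx n (K u v).
have approx : forall c d, c \in h -> d \in h ->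
    `|Num.sqrt (1 - K c.2 d.2) - (1 - q c.2 d.2)| <= 2 / n.+1%:R.
  move=> c d hc hd; have [/andP[_ q_le] err] := sqrt1m_approx_bounds n (K01 c d hc hd).
  rewrite distrC ger0_norm; last by rewrite /q; lra.
  apply: le_trans (_ : _ <= 2 / (n + 2)%:R) _; first by rewrite /q; lra.
  by rewrite ler_pM2l // lef_pV2 ?posrE ?ltr0n ?addn2 // ler_nat.
apply: le_trans (qform_le_approx (K' := fun u v => 1 - q u v) approx) _.
rewrite qform1B mass0 mulr0 sub0r [leRHS]mulrAC gerDr oppr_le0.
exact/gram_qform_ge0/gram_sqrt1m_approx.
Qed.

End Sqrt1mApprox.

Lemma sqrtD_sqr_sub_le (R : rcfType) (a b : R) :
  0 <= a -> `|Num.sqrt (a + b ^+ 2) - Num.sqrt a| <= `|b|.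
Proof.
move=> a_ge0; have sa_ge0 := sqrtr_ge0 a; have b2_ge0 := sqr_ge0 b.
rewrite ger0_norm; last by rewrite subr_ge0 ler_sqrt ?lerDl // addr_ge0.
rewrite lerBlDl -[leRHS]ger0_norm ?addr_ge0 // -(sqrtr_sqr (_ + `|b|)).
rewrite ler_sqrt ?sqr_ge0 // sqrrD sqr_sqrtr // real_normK ?num_real //.
by rewrite lerD2r lerDl mulrn_wge0 // mulr_ge0.
Qed.

Section EuclideanDistance.
Variables (R : realType) (p : nat).
Notation pt := 'rV[R]_p.
Implicit Types (t A : R) (u v : pt) (h : seq (R * pt)).

Definition sqnorm v := \sum_(i < p) v 0 i ^+ 2.
Definition dotp u v := \sum_(i < p) u 0 i * v 0 i.

Lemma sqnorm_ge0 v : 0 <= sqnorm v.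
Proof. by apply: sumr_ge0 => i _; apply: sqr_ge0. Qed.

Lemma sqnormB u v : sqnorm (u - v) = sqnorm u + sqnorm v - 2 * dotp u v.
Proof.
rewrite /sqnorm /dotp mulr_sumr -big_split -sumrB.
by apply: eq_bigr => i _; rewrite !mxE /=; ring.
Qed.

Lemma sqnormD u v : sqnorm (u + v) = sqnorm u + sqnorm v + 2 * dotp u v.
Proof.
rewrite /sqnorm /dotp mulr_sumr -!big_split.
by apply: eq_bigr => i _; rewrite !mxE /=; ring.
Qed.

Lemma enormN v : enorm (- v) = enorm v.
Proof. by rewrite /enorm; congr Num.sqrt; apply: eq_bigr => i _; rewrite mxE sqrrN. Qed.

Lemma enormB u v : enorm (u - v) = enorm (v - u).
Proof. by rewrite -opprB enormN. Qed.

Lemma enorm0 : enorm (0 : pt) = 0.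
Proof. by rewrite /enorm big1 ?sqrtr0 // => i _; rewrite mxE expr0n. Qed.

(* For [sqnorm u <= t ^+ 2], the point [(u, sphere_lift t u)] of [R^(p+1)] lies
   on the sphere of radius [t], and [sphere_kernel t] is the cosine of the
   angle between two lifted points. *)
Definition sphere_lift (t : R) u := Num.sqrt (t ^+ 2 - sqnorm u).
Definition sphere_kernel (t : R) u v :=
  (dotp u v + sphere_lift t u * sphere_lift t v) / t ^+ 2.

Lemma gram_sphere_kernel t : is_gram (sphere_kernel t).
Proof.
exists ((fun u => t^-1 * sphere_lift t u) ::
        [seq (fun u : pt => t^-1 * u 0 i) | i <- index_enum 'I_p]) => u v.
rewrite big_cons big_map /sphere_kernel /dotp mulrDl mulr_suml addrC.
congr (_ + _); first by rewrite -exprVn; ring.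
by apply: eq_bigr => i _; rewrite -exprVn; ring.
Qed.

Lemma sphere_kernel_dist t u v : t != 0 ->
  sqnorm u <= t ^+ 2 -> sqnorm v <= t ^+ 2 ->
  2 * t ^+ 2 * (1 - sphere_kernel t u v) =
  sqnorm (u - v) + (sphere_lift t u - sphere_lift t v) ^+ 2.
Proof.
move=> t_neq0 u_le v_le.
by rewrite sqnormB sqrrB !sqr_sqrtr ?subr_ge0 // /sphere_kernel; field.
Qed.

Lemma sphere_lift_ge t A u : 0 < t -> 4 * A <= t ^+ 2 ->
  sqnorm u <= A -> t / 2 <= sphere_lift t u.
Proof.
move=> t_gt0 A_le u_le; have := sqnorm_ge0 u => u_ge0.
rewrite -[leLHS]ger0_norm ?divr_ge0 ?(ltW t_gt0) // -sqrtr_sqr /sphere_lift.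
rewrite ler_sqrt; last lra.
have -> : (t / 2) ^+ 2 = t ^+ 2 / 4 by field.
lra.
Qed.

Lemma sphere_kernel_ge0_le1 t A u v : 0 < t -> 4 * A <= t ^+ 2 ->
  sqnorm u <= A -> sqnorm v <= A ->
  0 <= sphere_kernel t u v <= 1.
Proof.
move=> t_gt0 A_le u_le v_le; have u_ge0 := sqnorm_ge0 u; have v_ge0 := sqnorm_ge0 v.
have lift_u := sphere_lift_ge t_gt0 A_le u_le.
have lift_v := sphere_lift_ge t_gt0 A_le v_le.
apply/andP; split.
  by rewrite divr_ge0 ?sqr_ge0 //; have := sqnorm_ge0 (u + v); rewrite sqnormD; nra.
have t2_gt0 : 0 < 2 * t ^+ 2 by rewrite mulr_gt0 ?exprn_gt0.
rewrite -subr_ge0 -(pmulr_rge0 _ t2_gt0) sphere_kernel_dist ?gt_eqF //; try lra.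
by rewrite addr_ge0 ?sqnorm_ge0 ?sqr_ge0.
Qed.

Lemma sphere_lift_sub_le t A u v : 0 < t -> 4 * A <= t ^+ 2 ->
  sqnorm u <= A -> sqnorm v <= A ->
  `|sphere_lift t u - sphere_lift t v| <= A / t.
Proof.
move=> t_gt0 A_le u_le v_le; have u_ge0 := sqnorm_ge0 u; have v_ge0 := sqnorm_ge0 v.
have lift_u := sphere_lift_ge t_gt0 A_le u_le.
have lift_v := sphere_lift_ge t_gt0 A_le v_le.
have prod : (sphere_lift t u - sphere_lift t v) * (sphere_lift t u + sphere_lift t v)
    = sqnorm v - sqnorm u.
  by rewrite -subr_sqr !sqr_sqrtr ?subr_ge0; [ring | nra | nra].
rewrite ler_pdivlMr //; apply: le_trans (_ : _ <= `|sqnorm v - sqnorm u|) _.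
  by rewrite -prod normrM ler_wpM2l // ger0_norm; nra.
by rewrite ler_norml; apply/andP; split; lra.
Qed.

Lemma dist_sphere_approx t A u v : 0 < t -> 4 * A <= t ^+ 2 ->
  sqnorm u <= A -> sqnorm v <= A ->
  `|Num.sqrt (2 * t ^+ 2) * Num.sqrt (1 - sphere_kernel t u v) - enorm (u - v)|
    <= A / t.
Proof.
move=> t_gt0 A_le u_le v_le; have A_ge0 : 0 <= A := le_trans (sqnorm_ge0 u) u_le.
rewrite -sqrtrM; last by rewrite mulr_ge0 // sqr_ge0.
rewrite sphere_kernel_dist ?gt_eqF //; try lra.
apply: le_trans (sqrtD_sqr_sub_le _ (sqnorm_ge0 _)) _.
exact: sphere_lift_sub_le t_gt0 A_le u_le v_le.
Qed.

Lemma qform_dist_le0 h : mass h = 0 -> qform (fun u v => enorm (u - v)) h h <= 0.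
Proof.
move=> mass0; set A := 1 + \sum_(c <- h) sqnorm c.2.
have sum_ge0 : 0 <= \sum_(c <- h) sqnorm c.2 by apply: sumr_ge0 => c _; exact: sqnorm_ge0.
have A_bound : forall c, c \in h -> sqnorm c.2 <= A.
  move=> c hc; rewrite /A (big_rem c hc) /= addrCA lerDl addr_ge0 //.
  by apply: sumr_ge0 => d _; exact: sqnorm_ge0.
have A_ge1 : 1 <= A by rewrite /A lerDl.
apply: (@le0_of_le_invS _ _ (A * abs_mass h ^+ 2)) => n.
set t := 4 * A + n.+1%:R.
have n_le_t : n.+1%:R <= t by rewrite /t lerDr; lra.
have t_gt0 : 0 < t by apply: lt_le_trans n_le_t; rewrite ltr0n.
have A_le : 4 * A <= t ^+ 2.
  have : 4 * A <= t by rewrite /t lerDl.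
  nra.
apply: le_trans (qform_le_approx
  (K' := fun u v => Num.sqrt (2 * t ^+ 2) * Num.sqrt (1 - sphere_kernel t u v))
  (e := A / t) _) _.
  move=> c d hc hd; rewrite distrC.
  exact: dist_sphere_approx t_gt0 A_le (A_bound c hc) (A_bound d hd).
rewrite qformZ -[leRHS]add0r lerD //.
  apply: mulr_ge0_le0; first exact: sqrtr_ge0.
  apply: qform_sqrt1m_le0 (gram_sphere_kernel t) mass0 _ => c d hc hd.
  exact: sphere_kernel_ge0_le1 t_gt0 A_le (A_bound c hc) (A_bound d hd).
have AM_ge0 : 0 <= A * abs_mass h ^+ 2 by rewrite mulr_ge0 ?sqr_ge0 //; lra.
by rewrite mulrAC ler_wpM2l // lef_pV2 ?posrE ?ltr0n.
Qed.

End EuclideanDistance.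

Section Convergence.
Local Open Scope classical_set_scope.

Lemma cvg_wsum (R : realFieldType) (T : eqType) (F_ : nat -> T -> R) (F : T -> R)
    (h : seq (R * T)) :
  (forall y, F_ m y @[m --> \oo] --> F y) -> wsum (F_ m) h @[m --> \oo] --> wsum F h.
Proof.
move=> cvgF; elim: h => [|c h IHh].
  by rewrite /wsum big_nil; under eq_cvg do rewrite big_nil; exact: cvg_cst.
rewrite /wsum big_cons; under eq_cvg do rewrite big_cons.
by apply: cvgD => //; apply: cvgMl_tmp.
Qed.

End Convergence.

Section EnergyKernel.
Variables (R : realType) (p : nat).
Notation pt := 'rV[R]_p.
Implicit Types (h g : seq (R * pt)).

Lemma pre_ipE h g : pre_ip h g = qform (@kE R p) h g.
Proof. by []. Qed.

Lemma EabsE h g : Eabs h g = qform (fun u v => enorm (u - v)) h g.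
Proof. by []. Qed.

Lemma kE_sym (u v : pt) : kE u v = kE v u.
Proof. by rewrite /kE enormB [enorm u + _]addrC. Qed.

Lemma pre_ip_ge0 h : 0 <= pre_ip h h.
Proof.
pose D (u v : pt) := enorm (u - v).
rewrite pre_ipE (@eq_qform _ _ _ (fun u v => D u 0 + D 0 v - D u v)); last first.
  by move=> u v; rewrite /D subr0 sub0r enormN.
rewrite qform_pointed ?oppr_ge0; last by rewrite /D subrr enorm0.
by apply: qform_dist_le0; rewrite /mass big_cons addNr.
Qed.

Lemma pre_ip_cauchy_schwarz h g : pre_ip h g ^+ 2 <= pre_ip h h * pre_ip g g.
Proof. exact: qform_cauchy_schwarz kE_sym pre_ip_ge0 h g. Qed.

Lemma energy_dist_pre_ip h g : mass h = 1 -> mass g = 1 ->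
  energy_dist h g = pre_ip (pre_sub h g) (pre_sub h g).
Proof.
move=> mass_h mass_g.
have -> : pre_sub h g = h ++ wscale (-1) g.
  by congr (_ ++ _); apply: eq_map => d; rewrite mulN1r.
have kE_split h' g' : qform (@kE R p) h' g' = wsum (@enorm R p) h' * mass g' +
    mass h' * wsum (@enorm R p) g' - Eabs h' g' by exact: qform_split.
rewrite pre_ipE qform_catl !qform_catr !qform_scalel !qform_scaler !kE_split.
rewrite /energy_dist mass_h mass_g [Eabs g h]EabsE qformC -?EabsE; first ring.
exact: enormB.
Qed.

Lemma wsum_pre_eval h g : wsum (pre_eval h) g = pre_ip h g.
Proof.
rewrite /wsum /pre_ip exchange_big; apply: eq_bigr => c _.
by rewrite mulr_sumr; apply: eq_bigr => d _; rewrite kE_sym; ring.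
Qed.

Lemma rkhs_wsum_sqr_le f r h :
  rkhs_norm_is f r -> wsum f h ^+ 2 <= r ^+ 2 * pre_ip h h.
Proof.
case=> u [_ [cvg_u cvg_norm]].
have cvg_wsum_u := cvg_wsum (h := h) cvg_u.
rewrite !expr2; apply: (ler_cvg_to (cvgM cvg_wsum_u cvg_wsum_u)
  (cvgMr_tmp (b := pre_ip h h) (cvgM cvg_norm cvg_norm))).
apply: nearW => m /=; rewrite -!expr2 wsum_pre_eval sqr_sqrtr ?pre_ip_ge0 //.
exact: pre_ip_cauchy_schwarz.
Qed.

Lemma wsum_pre_sub (F : pt -> R) h g : wsum F (pre_sub h g) = wsum F h - wsum F g.
Proof.
rewrite /wsum big_cat big_map -sumrN /=; congr (_ + _).
by apply: eq_bigr => d _; rewrite mulNr.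
Qed.

Lemma wsum_empirical N (x : 'I_N -> pt) (s : {set 'I_N}) (F : pt -> R) :
  wsum F (empirical x s) = #|s|%:R^-1 * \sum_(i in s) F (x i).
Proof. by rewrite /wsum big_map big_enum mulr_sumr. Qed.

Lemma mass_empirical N (x : 'I_N -> pt) (s : {set 'I_N}) :
  (0 < #|s|)%N -> mass (empirical x s) = 1.
Proof.
move=> s_gt0; rewrite /mass big_map big_enum sumr_const -[LHS]mulr_natr mulVf //.
by rewrite pnatr_eq0 -lt0n.
Qed.

End EnergyKernel.

Theorem proposition1 (R : realType) (p N n : nat) (x : 'I_N -> 'rV[R]_p)
    (f : 'rV[R]_p -> R) (normf : R) (P : {set 'I_N} -> R) :
  (0 < n)%N ->
  rkhs_norm_is f normf ->
  (forall s, 0 <= P s) ->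
  \sum_(s : {set 'I_N}) P s = 1 ->
  (forall s, P s != 0 -> #|s| = n) ->
  \sum_(s : {set 'I_N})
      P s * (N%:R / n%:R * \sum_(i in s) f (x i) - \sum_(i < N) f (x i)) ^+ 2
  <= N%:R ^+ 2 * normf ^+ 2 *
     \sum_(s : {set 'I_N}) P s * energy_dist (empirical x s) (empirical x [set: 'I_N]).
Proof.
move=> n_gt0 f_norm P_ge0 _ P_support; rewrite mulr_sumr; apply: ler_sum => s _.
have [->|Ps_neq0] := eqVneq (P s) 0; first by rewrite !mul0r mulr0.
have card_s := P_support s Ps_neq0.
have card_U : #|[set: 'I_N]| = N by rewrite cardsT card_ord.
have N_gt0 : (0 < N)%N.
  by have := max_card s; rewrite card_ord card_s; apply: leq_trans.
set g := pre_sub (empirical x s) (empirical x [set: 'I_N]).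
have error_eq : N%:R / n%:R * \sum_(i in s) f (x i) - \sum_(i < N) f (x i)
    = N%:R * wsum f g.
  rewrite wsum_pre_sub !wsum_empirical card_s card_U.
  rewrite (eq_bigl _ _ (@finset.in_setT _)); field.
  by rewrite !pnatr_eq0 -!lt0n N_gt0 n_gt0.
rewrite error_eq energy_dist_pre_ip ?mass_empirical ?card_s ?card_U // -/g.
have := rkhs_wsum_sqr_le g f_norm.
rewrite exprMn -mulrA mulrCA [_ * (P s * _)]mulrCA.
move=> bound; apply: ler_wpM2l; first exact: sqr_ge0.
exact: ler_wpM2l.
Qed.
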